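(* Let a discrete mean-field game be given (setting in the context) and fix $\epsilon>0$. (CCE version) Run MF-PSRO(CCE): start with $\Pi_1=\{\pi_1\}$, $\pi_1\in\Pi$. At each iteration $n$, let $\rho_n$ be a finitely supported distribution over $\Delta(\Pi_n)$ that is a restricted $\epsilon$-MFCCE for $\Pi_n$ (as obtained from a no-external-regret learner run until its average regret is at most $\epsilon$); pick $\pi^{new}\in\arg\max_{\pi\in\Pi}\sum_\nu\rho_n(\nu)J(\pi,\mu(\nu))$, set $\Pi_{n+1}=\Pi_n\cup\{\pi^{new}\}$, and terminate if $\Pi_{n+1}=\Pi_n$. Then the algorithm terminates after finitely many iterations and the final $\rho_n$ is an $\epsilon$-MFCCE of the full game. (CE version) Run MF-PSRO(CE): same, except that $\rho_n$ is a restricted $\epsilon$-MFCE for $\Pi_n$ (as obtained from a no-internal-regret learner with average regret at most $\epsilon$), and $\Pi_{n+1}=\Pi_n\cup\{\pi^{new}(\pi_k):\pi_k\in\Pi_n,\ \rho_n(\pi_k)>0\}$ where $\pi^{new}(\pi_k)\in\arg\max_{\pi\in\Pi}\sum_\nu\rho_n(\nu\mid\pi_k)J(\pi,\mu(\nu))$. Then the algorithm terminates after finitely many iterations and the final $\rho_n$ is an $\epsilon$-MFCE of the full game.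
   Context: A discrete mean-field game consists of a finite state set $\mathcal X$, a finite action set $\mathcal A$, a reward $r:\mathcal X\times\mathcal A\times\Delta(\mathcal X)\to\mathbb R$, transition probabilities $p(x'\mid x,a)$ not depending on the population distribution, and an initial distribution $\mu_0$. A policy is $\pi:\mathcal X\to\Delta(\mathcal A)$; $\Pi$ is the finite set of deterministic policies; $\mu^\pi$ is the state occupancy measure of $\pi$ (discounted or finite-horizon); $J(\pi,\mu)=\sum_{x,a}\mu^\pi(x)\pi(x,a)r(x,a,\mu)$. For $\nu$ a distribution over a finite set of policies, $\mu(\nu)=\sum_\pi\nu(\pi)\mu^\pi$ and $\pi(\nu)$ is the policy sampling a policy from $\nu$ at the start and playing it throughout, so $J(\pi(\nu),\mu)=\sum_\pi\nu(\pi)J(\pi,\mu)$. For a finitely supported correlation device $\rho$ over $\Delta(\Pi_n)$: $\rho(\pi)=\sum_\nu\nu(\pi)\rho(\nu)$ and $\rho(\nu\mid\pi)=\nu(\pi)\rho(\nu)/\sum_{\nu'}\nu'(\pi)\rho(\nu')$. $\rho$ is a restricted $\epsilon$-MFCCE for $\Pi_n$ if $\mathbb E_{\nu\sim\rho,\pi\sim\nu}[J(\pi',\mu(\nu))-J(\pi,\mu(\nu))]\le\epsilon$ for all $\pi'\in\Pi_n$, and an $\epsilon$-MFCCE of the full game if this holds for all $\pi'\in\Pi$. $\rho$ is a restricted $\epsilon$-MFCE for $\Pi_n$ if $\rho(\pi)\,\mathbb E_{\nu\sim\rho(\cdot\mid\pi)}[J(\pi',\mu(\nu))-J(\pi,\mu(\nu))]\le\epsilon$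 for all $\pi,\pi'\in\Pi_n$, and an $\epsilon$-MFCE of the full game if this holds for all $\pi\in\Pi_n$ and all $\pi'\in\Pi$ (recommendations $\pi$ lie in the support, which is inside $\Pi_n$). *)

From HB Require Import structures.
From mathcomp Require Import all_boot all_order all_algebra.
Set Implicit Arguments. Unset Strict Implicit. Unset Printing Implicit Defensive.
Import Order.TTheory GRing.Theory Num.Theory.
Local Open Scope ring_scope.

(* Occupancy-measure convention: finite horizon T (mu^pi = sum_{t<T} mu_t)
   or discounted with factor gamma (mu^pi = (1-gamma) sum_t gamma^t mu_t,
   computed in closed form as (1-gamma) mu_0 (I - gamma P_pi)^{-1}). *)
Inductive horizon (R : Type) := FiniteH of nat | Discounted of R.

Section MFG.
Variable R : realFieldType.
Variables nX nA : nat.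

Definition policy := {ffun 'I_nX -> 'I_nA}.
(* correlation device: finitely supported distribution over Delta(Pi_n),
   given as a finite list of (weight rho(nu), distribution nu over policies) *)
Definition cdev := seq (R * {ffun policy -> R}).

Variable reward : 'I_nX -> 'I_nA -> 'rV[R]_nX -> R.
Variable trans : 'I_nX -> 'I_nA -> 'I_nX -> R.
Variable mu0 : 'rV[R]_nX.
Variable hor : horizon R.

Definition is_pdist (m : 'rV[R]_nX) := (forall x, 0 <= m 0 x) /\ \sum_x m 0 x = 1.

Definition valid_game :=
  (forall x a y, 0 <= trans x a y) /\ (forall x a, \sum_y trans x a y = 1) /\
  is_pdist mu0 /\
  (match hor with FiniteH T => (0 < T)%N | Discounted g => 0 <= g < 1 end).

Definition polp (pi : policy) (x : 'I_nX) (a : 'I_nA) : R := (pi x == a)%:R.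

Definition trans_mx (pi : policy) : 'M[R]_nX :=
  \matrix_(x, y) \sum_a polp pi x a * trans x a y.

Definition occ (pi : policy) : 'rV[R]_nX :=
  match hor with
  | FiniteH T => \sum_(t < T) iter t (fun m => m *m trans_mx pi) mu0
  | Discounted g => (1 - g) *: (mu0 *m invmx (1%:M - g *: trans_mx pi))
  end.

Definition J (pi : policy) (mu : 'rV[R]_nX) : R :=
  \sum_x \sum_a occ pi 0 x * polp pi x a * reward x a mu.

Definition mu_of (nu : {ffun policy -> R}) : 'rV[R]_nX := \sum_pi nu pi *: occ pi.

Definition is_dist_on (S : {set policy}) (nu : {ffun policy -> R}) :=
  (forall pi, 0 <= nu pi) /\ \sum_pi nu pi = 1 /\ (forall pi, nu pi != 0 -> pi \in S).

Definition is_cdev_on (S : {set policy}) (rho : cdev) :=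
  (forall e, e \in rho -> 0 <= e.1 /\ is_dist_on S e.2) /\ \sum_(e <- rho) e.1 = 1.

Definition rho_pol (rho : cdev) (pi : policy) : R := \sum_(e <- rho) e.1 * e.2 pi.

Definition rho_cond (rho : cdev) (e : R * {ffun policy -> R}) (pi : policy) : R :=
  e.2 pi * e.1 / rho_pol rho pi.

Definition cce_gap (rho : cdev) (pi' : policy) : R :=
  \sum_(e <- rho) e.1 * \sum_pi e.2 pi * (J pi' (mu_of e.2) - J pi (mu_of e.2)).

Definition ce_gap (rho : cdev) (pi pi' : policy) : R :=
  rho_pol rho pi *
  \sum_(e <- rho) rho_cond rho e pi * (J pi' (mu_of e.2) - J pi (mu_of e.2)).

Definition restricted_MFCCE (eps : R) (S : {set policy}) (rho : cdev) :=
  forall pi', pi' \in S -> cce_gap rho pi' <= eps.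
Definition MFCCE (eps : R) (rho : cdev) :=
  forall pi', cce_gap rho pi' <= eps.
Definition restricted_MFCE (eps : R) (S : {set policy}) (rho : cdev) :=
  forall pi pi', pi \in S -> pi' \in S -> ce_gap rho pi pi' <= eps.
Definition MFCE (eps : R) (S : {set policy}) (rho : cdev) :=
  forall pi pi', pi \in S -> ce_gap rho pi pi' <= eps.

Definition br_val (rho : cdev) (pi : policy) : R :=
  \sum_(e <- rho) e.1 * J pi (mu_of e.2).
Definition br_val_cond (rho : cdev) (pk pi : policy) : R :=
  \sum_(e <- rho) rho_cond rho e pk * J pi (mu_of e.2).

Definition running (Pis : nat -> {set policy}) (n : nat) :=
  forall m, (m < n)%N -> Pis m.+1 != Pis m.

(* a run of MF-PSRO(CCE): Pis n = Pi_n (Pi_1 = Pis 0), rhos n = rho_n,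
   pnew n = pi^new at iteration n; the rules constrain every iteration
   reached before termination. *)
Definition psro_cce_run (eps : R) (pi1 : policy) (Pis : nat -> {set policy})
    (rhos : nat -> cdev) (pnew : nat -> policy) :=
  Pis 0%N = [set pi1] /\
  forall n, running Pis n ->
    [/\ is_cdev_on (Pis n) (rhos n),
        restricted_MFCCE eps (Pis n) (rhos n),
        (forall pi, br_val (rhos n) pi <= br_val (rhos n) (pnew n)) &
        Pis n.+1 = Pis n :|: [set pnew n]].

Definition psro_ce_run (eps : R) (pi1 : policy) (Pis : nat -> {set policy})
    (rhos : nat -> cdev) (pnew : nat -> policy -> policy) :=
  Pis 0%N = [set pi1] /\
  forall n, running Pis n ->
    [/\ is_cdev_on (Pis n) (rhos n),
        restricted_MFCE eps (Pis n) (rhos n),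
        (forall pk, pk \in Pis n -> 0 < rho_pol (rhos n) pk ->
           forall pi, br_val_cond (rhos n) pk pi <= br_val_cond (rhos n) pk (pnew n pk)) &
        Pis n.+1 = Pis n :|: [set pnew n pk | pk in Pis n & 0 < rho_pol (rhos n) pk]].

End MFG.

(* Both algorithms only ever enlarge the finite restricted policy set, so they
   stop; at the stopping iteration every best response to rho_n (resp. to each
   conditional rho_n(. | pi_k) with pi_k recommended) already lies in Pi_n.
   The gain of deviating to pi' is the best-response objective of pi' minus a
   term independent of pi', so it is largest at a best response, where it is
   at most eps by restricted equilibrium.  Recommendations of mass zero have
   CE gap zero.  No property of the game itself is needed. *)
From HB Require Import structures.
From mathcomp Require Import all_boot all_order all_algebra.
Import Order.TTheory GRing.Theory Num.Theory.
Local Open Scope ring_scope.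

Section GrowingSets.
Variables (T : finType) (P : nat -> {set T}).

Lemma proper_chain_card n :
  (forall m, (m < n)%N -> P m \proper P m.+1) -> (n <= #|P n|)%N.
Proof.
elim: n => // n IHn chain.
apply: leq_ltn_trans (IHn _) (proper_card (chain n _)) => // m ltmn.
exact/chain/ltnW.
Qed.

Lemma growing_sets_stabilize :
  (forall n, (forall m, (m < n)%N -> P m.+1 != P m) -> P n \subset P n.+1) ->
  exists N, (forall m, (m < N)%N -> P m.+1 != P m) /\ P N.+1 = P N.
Proof.
move=> grow.
have [/existsP[i stop_i] | ] := boolP [exists i : 'I_#|T|.+1, P i.+1 == P i].
  have ex_stop : exists n, P n.+1 == P n by exists i.
  case: (ex_minnP ex_stop) => N /eqP stopN minN.
  by exists N; split=> // m ltmN; apply/negP=> /minN; rewrite leqNgt ltmN.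
move=> /existsPn moving.
have moving_lt m : (m < #|T|.+1)%N -> P m.+1 != P m.
  by move=> ltm; exact: (moving (Ordinal ltm)).
suff: (#|T|.+1 <= #|P #|T|.+1|)%N by rewrite leqNgt ltnS max_card.
apply: proper_chain_card => m ltm.
rewrite properEneq eq_sym moving_lt //; apply: grow => k ltkm.
exact/moving_lt/(ltn_trans ltkm).
Qed.

End GrowingSets.

Section RestrictedToFull.
Variables (R : realFieldType) (nX nA : nat).
Variable reward : 'I_nX -> 'I_nA -> 'rV[R]_nX -> R.
Variable trans : 'I_nX -> 'I_nA -> 'I_nX -> R.
Variables (mu0 : 'rV[R]_nX) (hor : horizon R).

Local Notation J := (J reward trans mu0 hor).
Local Notation cce_gap := (cce_gap reward trans mu0 hor).
Local Notation ce_gap := (ce_gap reward trans mu0 hor).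
Local Notation br_val := (br_val reward trans mu0 hor).
Local Notation br_val_cond := (br_val_cond reward trans mu0 hor).

Definition rec_val (rho : cdev R nX nA) : R :=
  \sum_(e <- rho) e.1 * \sum_pi e.2 pi * J pi (mu_of trans mu0 hor e.2).

Definition rec_val_cond (rho : cdev R nX nA) (pk : policy nX nA) : R :=
  \sum_(e <- rho) rho_cond rho e pk * J pk (mu_of trans mu0 hor e.2).

Lemma cce_gapE {S : {set policy nX nA}} {rho : cdev R nX nA} pi' :
  is_cdev_on S rho -> cce_gap rho pi' = br_val rho pi' - rec_val rho.
Proof.
move=> [dev _]; rewrite /cce_gap /br_val /rec_val -sumrB !big_seq.
apply: eq_bigr => e /dev[_ [_ [sum_nu _]]]; rewrite -mulrBr; congr (_ * _).
by under eq_bigr do rewrite mulrBr; rewrite sumrB -mulr_suml sum_nu mul1r.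
Qed.

Lemma ce_gapE (rho : cdev R nX nA) pk pi' :
  ce_gap rho pk pi' = rho_pol rho pk * (br_val_cond rho pk pi' - rec_val_cond rho pk).
Proof.
rewrite /ce_gap /br_val_cond /rec_val_cond -sumrB.
by congr (_ * _); apply: eq_bigr => e _; rewrite mulrBr.
Qed.

Lemma rho_pol_ge0 {S : {set policy nX nA}} {rho : cdev R nX nA} pi :
  is_cdev_on S rho -> 0 <= rho_pol rho pi.
Proof.
move=> [dev _]; rewrite /rho_pol big_seq.
by apply: sumr_ge0 => e /dev[w_ge0 [nu_ge0 _]]; exact: mulr_ge0 w_ge0 (nu_ge0 pi).
Qed.

Lemma MFCCE_of_restricted eps (S : {set policy nX nA}) (rho : cdev R nX nA) pbest :
  is_cdev_on S rho -> restricted_MFCCE reward trans mu0 hor eps S rho ->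
  (forall pi, br_val rho pi <= br_val rho pbest) -> pbest \in S ->
  MFCCE reward trans mu0 hor eps rho.
Proof.
move=> rho_dev rho_eq best best_in pi'.
apply: le_trans (rho_eq _ best_in).
by rewrite !(cce_gapE _ rho_dev) lerD2r; exact: best.
Qed.

Lemma MFCE_of_restricted eps (S : {set policy nX nA}) (rho : cdev R nX nA)
    (pbest : policy nX nA -> policy nX nA) :
  0 <= eps -> is_cdev_on S rho -> restricted_MFCE reward trans mu0 hor eps S rho ->
  (forall pk, pk \in S -> 0 < rho_pol rho pk ->
     pbest pk \in S /\
     forall pi, br_val_cond rho pk pi <= br_val_cond rho pk (pbest pk)) ->
  MFCE reward trans mu0 hor eps S rho.
Proof.
move=> eps_ge0 rho_dev rho_eq best pk pi' pk_in.
have [mass_gt0 | mass_le0] := ltrP 0 (rho_pol rho pk); last first.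
  have mass0 : rho_pol rho pk = 0.
    by apply/eqP; rewrite eq_le mass_le0 (rho_pol_ge0 pk rho_dev).
  by rewrite ce_gapE mass0 mul0r.
have [best_in best_pk] := best pk pk_in mass_gt0.
apply: le_trans (rho_eq _ _ pk_in best_in).
by rewrite !ce_gapE ler_pM2l // lerD2r; exact: best_pk.
Qed.

End RestrictedToFull.

Theorem mainTheorem5 (R : realFieldType) (nX nA : nat)
  (reward : 'I_nX -> 'I_nA -> 'rV[R]_nX -> R)
  (trans : 'I_nX -> 'I_nA -> 'I_nX -> R)
  (mu0 : 'rV[R]_nX) (hor : horizon R) (eps : R) :
  valid_game trans mu0 hor -> 0 < eps ->
  (forall (pi1 : policy nX nA) (Pis : nat -> {set policy nX nA})
          (rhos : nat -> cdev R nX nA) (pnew : nat -> policy nX nA),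
     psro_cce_run reward trans mu0 hor eps pi1 Pis rhos pnew ->
     exists N, [/\ running Pis N, Pis N.+1 = Pis N &
                   MFCCE reward trans mu0 hor eps (rhos N)]) /\
  (forall (pi1 : policy nX nA) (Pis : nat -> {set policy nX nA})
          (rhos : nat -> cdev R nX nA) (pnew : nat -> policy nX nA -> policy nX nA),
     psro_ce_run reward trans mu0 hor eps pi1 Pis rhos pnew ->
     exists N, [/\ running Pis N, Pis N.+1 = Pis N &
                   MFCE reward trans mu0 hor eps (Pis N) (rhos N)]).
Proof.
move=> _ eps_gt0; split=> pi1 Pis rhos pnew [_ step].
- have [|N [runN stopN]] := @growing_sets_stabilize _ Pis.
    by move=> n /step[_ _ _ ->]; exact: subsetUl.
  exists N; split=> //; have [rho_dev rho_eq best growN] := step N runN.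
  apply: MFCCE_of_restricted rho_dev rho_eq best _.
  by move: stopN; rewrite growN => /setUidPl; rewrite sub1set.
- have [|N [runN stopN]] := @growing_sets_stabilize _ Pis.
    by move=> n /step[_ _ _ ->]; exact: subsetUl.
  exists N; split=> //; have [rho_dev rho_eq best growN] := step N runN.
  apply: MFCE_of_restricted (ltW eps_gt0) rho_dev rho_eq _ => pk pk_in mass_gt0.
  split; last exact: best.
  move: stopN; rewrite growN => /setUidPl /subsetP; apply.
  by apply/imsetP; exists pk; rewrite // inE pk_in mass_gt0.
Qed.
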